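(* For every $n \ge 1$ and every proximity parameter $0<\epsilon<1$, there exists a non-adaptive $\epsilon$-tester with one-sided error for convexity of functions $f\colon [n]\to\mathbb{R}$, where $[n]=\{0,1,\dots,n-1\}$, whose query complexity is $O\!\left(\frac{\log(\epsilon n)}{\epsilon}\right)$.
   Context: A function $f\colon X\to\mathbb{R}$ on a finite set $X\subseteq\mathbb{R}^d$ is convex if for every finite collection $x_1,\dots,x_k\in X$ and reals $\lambda_i\ge 0$ with $\sum_i\lambda_i=1$ and $\sum_i\lambda_i x_i\in X$, one has $f(\sum_i\lambda_i x_i)\le\sum_i\lambda_i f(x_i)$. A function $g\colon X\to\mathbb{R}$ is $\epsilon$-far from convex if every convex $h\colon X\to\mathbb{R}$ differs from $g$ on at least $\epsilon|X|$ points of $X$. An $\epsilon$-tester for convexity is a randomized algorithm that queries values of an unknown $f$ and accepts with probability at least $2/3$ if $f$ is convex and rejects with probability at least $2/3$ if $f$ is $\epsilon$-far from convex; it has one-sided error if it accepts every convex function with probability $1$, and is non-adaptive if all queried points are chosen before any value is observed. The query complexity is the worst-case number of queries. *)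

From HB Require Import structures.
From mathcomp Require Import all_boot all_order all_algebra.
From mathcomp Require Import reals exp.
Set Implicit Arguments. Unset Strict Implicit. Unset Printing Implicit Defensive.
Import Order.TTheory GRing.Theory Num.Theory.
Local Open Scope ring_scope.

Section Defs.
Variable R : realType.

Definition convex_fun (n : nat) (f : 'I_n -> R) : Prop :=
  forall (k : nat) (x : 'I_k -> 'I_n) (lam : 'I_k -> R),
    (forall i, 0 <= lam i) -> \sum_(i < k) lam i = 1 ->
    forall y : 'I_n, \sum_(i < k) lam i * (x i)%:R = y%:R ->
      f y <= \sum_(i < k) lam i * f (x i).

Definition eps_far (n : nat) (eps : R) (g : 'I_n -> R) : Prop :=
  forall h : 'I_n -> R, convex_fun h ->
    eps * n%:R <= (#|[set x : 'I_n | g x != h x]|)%:R.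

(* A randomized non-adaptive tester: a finite probability space of seeds
   (Omega, D); on seed w it queries the points Q w (chosen before any value
   is seen) and outputs dec w applied to the sequence of observed values. *)
Definition is_distr (Omega : finType) (D : Omega -> R) : Prop :=
  (forall w, 0 <= D w) /\ \sum_(w : Omega) D w = 1.

Definition acc_prob (n : nat) (Omega : finType) (D : Omega -> R)
  (Q : Omega -> seq 'I_n) (dec : Omega -> seq R -> bool) (f : 'I_n -> R) : R :=
  \sum_(w : Omega) D w * (dec w (map f (Q w)) : nat)%:R.

Definition nonadaptive_1sided_tester (n : nat) (eps : R) (q : nat)
  (Omega : finType) (D : Omega -> R) (Q : Omega -> seq 'I_n)
  (dec : Omega -> seq R -> bool) : Prop :=
  [/\ is_distr D,
      forall w, (size (Q w) <= q)%N,
      forall f : 'I_n -> R, convex_fun f -> acc_prob D Q dec f = 1 &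
      forall f : 'I_n -> R, eps_far eps f -> acc_prob D Q dec f <= 1 / 3].

End Defs.

From HB Require Import structures.
From mathcomp Require Import all_boot all_order all_algebra.
From mathcomp Require Import reals exp.
From mathcomp Require Import ring lra zify.
Import Order.TTheory GRing.Theory Num.Theory.
Local Open Scope ring_scope.
Set Implicit Arguments. Unset Strict Implicit. Unset Printing Implicit Defensive.

(* Let P x be the query set of x: the multiples of 2^J and their predecessors, plus the
   points next to the multiples of 2^j nearest to x at each scale j < J.  Sample
   t ~ 2/eps points x uniformly, query the union of the P x and accept iff the observed
   values satisfy the three-point convexity inequality on it; convex functions always
   pass.  Call x good if f satisfies that inequality on P x alone.  For good b < g the
   sets P b and P g share two consecutive points d, d+1 with b <= d < d+1 <= g, namely
   the multiple of the largest 2^j <= g - b just above b (or of 2^J if g - b >= 2^J)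
   and its predecessor.  Comparing slopes, the secant of f through the consecutive pair
   at b stays below the secant through d, d+1, which stays below f at g.  So the maximum
   of these secants over the good points is convex and agrees with f on them; if f is
   eps-far from convex, at most (1 - eps) n points are good and all t samples are good
   with probability at most (1 - eps)^t <= 1/3.  The query count is
   t + 2 + 8 t J = O(log(eps n) / eps). *)

Definition edge_within N (A : {set 'I_N}) (b g : nat) : Prop :=
  exists d d' : 'I_N, [/\ d' = d.+1 :> nat, d \in A, d' \in A, (b <= d)%N & (d' <= g)%N].

Lemma edge_withinS N (A B : {set 'I_N}) b g :
  A \subset B -> edge_within A b g -> edge_within B b g.
Proof.
move=> /subsetP AB [d [d' [dd' dA d'A bd d'g]]].
by exists d, d'; split=> //; apply: AB.
Qed.

Section ThreePointConvexity.
Variables (R : realType) (N : nat).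
Implicit Types (f : 'I_N -> R) (S : {set 'I_N}).

Definition convex3 f (a b c : 'I_N) : bool :=
  (c%:R - a%:R) * f b <= (c%:R - b%:R) * f a + (b%:R - a%:R) * f c.

Definition convex_on S f : bool :=
  [forall a in S, forall b in S, forall c in S, ((a < b)%N && (b < c)%N) ==> convex3 f a b c].

Lemma convex_onP S f :
  reflect (forall a b c, a \in S -> b \in S -> c \in S -> (a < b)%N -> (b < c)%N ->
             convex3 f a b c)
          (convex_on S f).
Proof.
apply: (iffP forall_inP) => [H a b c aS bS cS ab bc | H a aS].
  by move: (H a aS) => /forall_inP/(_ b bS)/forall_inP/(_ c cS)/implyP; apply; rewrite ab.
by apply/forall_inP => b bS; apply/forall_inP => c cS; apply/implyP => /andP[]; apply: H.
Qed.

Lemma convex_onS S (T : {set 'I_N}) f : S \subset T -> convex_on T f -> convex_on S f.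
Proof.
move=> /subsetP ST /convex_onP H; apply/convex_onP => a b c aS bS cS.
by apply: H; apply: ST.
Qed.

Lemma eq_convex_on S f g : {in S, f =1 g} -> convex_on S f = convex_on S g.
Proof.
move=> fg; apply/convex_onP/convex_onP => H a b c aS bS cS ab bc.
  by have := H a b c aS bS cS ab bc; rewrite /convex3 !fg.
by have := H a b c aS bS cS ab bc; rewrite /convex3 !fg.
Qed.

Lemma convex_fun_convex3 f (a b c : 'I_N) :
  convex_fun f -> (a < b)%N -> (b < c)%N -> convex3 f a b c.
Proof.
move=> cf ab bc.
have ab' : a%:R < b%:R :> R by rewrite ltr_nat.
have bc' : b%:R < c%:R :> R by rewrite ltr_nat.
pose lc : R := (c%:R - b%:R) / (c%:R - a%:R).
pose la : R := (b%:R - a%:R) / (c%:R - a%:R).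
pose x (i : 'I_2) := if val i == 0%N then a else c.
pose lam (i : 'I_2) := if val i == 0%N then lc else la.
have := cf 2%N x lam _ _ b; rewrite !big_ord_recr !big_ord0 /= !add0r /x /lam /=.
move=> H; rewrite /convex3 -ler_pdivlMl ?subr_gt0; last lra.
have -> : ((c%:R - a%:R)^-1 * ((c%:R - b%:R) * f a + (b%:R - a%:R) * f c))
          = lc * f a + la * f c by rewrite /lc /la; field; lra.
apply: H; rewrite /lc /la.
- by case=> [[|[|]]] //= _; apply: divr_ge0; lra.
- by field; lra.
- by field; lra.
Qed.

Lemma convex_fun_convex_on S f : convex_fun f -> convex_on S f.
Proof.
by move=> cf; apply/convex_onP => a b c _ _ _; apply: convex_fun_convex3.
Qed.

Lemma convex_fun_le1 f : (N <= 1)%N -> convex_fun f.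
Proof.
move=> N1 k x lam _ s1 y _.
have E (a : 'I_N) : a = y by apply: val_inj => /=; have := ltn_ord a; have := ltn_ord y; lia.
under eq_bigr => i _ do rewrite (E (x i)).
by rewrite -mulr_suml s1 mul1r.
Qed.

Definition secant f (c c' : 'I_N) (z : R) : R := f c + (f c' - f c) * (z - c%:R).

Lemma secantE f c c' z :
  secant f c c' z = (f c - (f c' - f c) * c%:R) + (f c' - f c) * z.
Proof. by rewrite /secant; ring. Qed.

Lemma secant_edge f (c c' b : 'I_N) :
  c' = c.+1 :> nat -> c = b \/ c' = b -> secant f c c' b%:R = f b.
Proof.
rewrite /secant => cc' [<-|<-]; first by rewrite subrr mulr0 addr0.
by rewrite cc' -natr1; ring.
Qed.

Lemma secant_le S f (c c' z : 'I_N) : convex_on S f ->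
  c \in S -> c' \in S -> z \in S -> c' = c.+1 :> nat -> secant f c c' z%:R <= f z.
Proof.
move=> /convex_onP H cS c'S zS cc'.
have c'R : c'%:R = c%:R + 1 :> R by rewrite cc' -natr1.
rewrite /secant; case: (ltngtP z c) => [zc|cz|/val_inj ->]; last by lra.
- have := H z c c' zS cS c'S zc; rewrite cc' ltnSn /convex3 c'R => /(_ isT).
  have : z%:R < c%:R :> R by rewrite ltr_nat.
  nra.
- have [/val_inj ->|c'z] : z = c' :> nat \/ (c' < z)%N by rewrite cc'; lia.
    by rewrite c'R; lra.
  have := H c c' z cS c'S zS; rewrite cc' ltnSn -cc' /convex3 c'R => /(_ isT c'z).
  have : c%:R + 1 < z%:R :> R by rewrite -c'R ltr_nat.
  nra.
Qed.

Lemma secant_slope_le S f (c c' d d' : 'I_N) : convex_on S f ->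
  c \in S -> c' \in S -> d \in S -> d' \in S -> c' = c.+1 :> nat -> d' = d.+1 :> nat ->
  (c <= d)%N -> f c' - f c <= f d' - f d.
Proof.
move=> H cS c'S dS d'S cc' dd'; rewrite leq_eqVlt => /orP[/eqP/val_inj cd|cd].
  subst d; have -> // : d' = c' by apply: val_inj => /=; rewrite dd' cc'.
have hc := secant_le H cS c'S dS cc'; have hd := secant_le H dS d'S cS dd'.
move: hc hd; rewrite /secant.
have : c%:R < d%:R :> R by rewrite ltr_nat.
nra.
Qed.

Lemma secant_le_through S T f (c c' d d' g : 'I_N) :
  convex_on S f -> convex_on T f ->
  c \in S -> c' \in S -> d \in S -> d' \in S -> d \in T -> d' \in T -> g \in T ->
  c' = c.+1 :> nat -> d' = d.+1 :> nat ->
  (c <= d <= g)%N || ((d <= c)%N && (g <= d')%N) ->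
  secant f c c' g%:R <= f g.
Proof.
move=> HS HT cS c'S dS d'S dT d'T gT cc' dd' cases.
apply: le_trans (secant_le HT dT d'T gT dd').
have hd := secant_le HS cS c'S dS cc'; have hd' := secant_le HS cS c'S d'S cc'.
have d'R : d'%:R = d%:R + 1 :> R by rewrite dd' -natr1.
move: hd hd'; rewrite /secant d'R.
case/orP: cases => [/andP[cd dg] | /andP[dc gd']].
- have := secant_slope_le HS cS c'S dS d'S cc' dd' cd.
  have : d%:R <= g%:R :> R by rewrite ler_nat.
  nra.
- have := secant_slope_le HS dS d'S cS c'S dd' cc' dc.
  have : g%:R <= d%:R + 1 :> R by rewrite -d'R ler_nat.
  nra.
Qed.

Lemma convex_fun_bigmax_lines (G : {set 'I_N}) (a s : 'I_N -> R) b0 : b0 \in G ->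
  convex_fun (fun z : 'I_N =>
    \big[Num.max/a b0 + s b0 * z%:R]_(b in G) (a b + s b * z%:R)).
Proof.
move=> b0G k x lam lam0 lam1 y xy.
have line b : a b + s b * y%:R = \sum_(i < k) lam i * (a b + s b * (x i)%:R).
  rewrite -xy mulr_sumr; under [RHS]eq_bigr do rewrite mulrDr mulrCA.
  by rewrite big_split /= -mulr_suml lam1 mul1r.
apply/bigmax_leP; split=> [|b bG]; rewrite line; apply: ler_sum => i _;
  by apply: ler_wpM2l; [exact: lam0 | apply: le_bigmax_cond].
Qed.

Section ConvexExtension.
Variables (f : 'I_N -> R) (P : 'I_N -> {set 'I_N}) (G : {set 'I_N}) (lo hi : 'I_N -> 'I_N).
Hypothesis convex_P : {in G, forall b, convex_on (P b) f}.
Hypothesis edge_P : forall b,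
  [/\ hi b = (lo b).+1 :> nat, lo b \in P b, hi b \in P b & lo b = b \/ hi b = b].
Hypothesis common_edge_P :
  {in G &, forall b g : 'I_N, (b < g)%N -> edge_within (P b :&: P g) b g}.

Lemma secant_le_good b g : b \in G -> g \in G -> secant f (lo b) (hi b) g%:R <= f g.
Proof.
move=> bG gG; have [hlb loP hiP lhb] := edge_P b.
have gP : g \in P g by have [_ ? ? [e|e]] := edge_P g; rewrite -{1}e.
have lob : (lo b <= b <= (lo b).+1)%N by case: lhb => /(congr1 val) /= e; lia.
case: (ltngtP b g) => [bg | gb | /val_inj <-]; last by rewrite secant_edge.
- have [d [d' [dd' /setIP[dPb dPg] /setIP[d'Pb d'Pg] bd d'g]]] := common_edge_P bG gG bg.
  apply: (secant_le_through (convex_P bG) (convex_P gG) loP hiP dPb d'Pb dPg d'Pg gP hlb dd').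
  apply/orP; left; apply/andP; split; lia.
- have [d [d' [dd' /setIP[dPg dPb] /setIP[d'Pg d'Pb] gd d'b]]] := common_edge_P gG bG gb.
  apply: (secant_le_through (convex_P bG) (convex_P gG) loP hiP dPb d'Pb dPg d'Pg gP hlb dd').
  apply/orP; right; apply/andP; split; lia.
Qed.

Lemma convex_extension : exists2 h, convex_fun h & {in G, h =1 f}.
Proof.
have [b0 b0G | G0] := pickP (mem G); last first.
  exists (fun _ => 0); last by move=> x; rewrite [_ \in _]G0.
  by move=> k x lam _ _ y _; rewrite big1 // => i _; rewrite mulr0.
pose s b := f (hi b) - f (lo b).
pose a b := f (lo b) - s b * (lo b)%:R.
exists (fun z : 'I_N => \big[Num.max/a b0 + s b0 * z%:R]_(b in G) (a b + s b * z%:R)).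
  exact: convex_fun_bigmax_lines.
move=> g gG; apply/le_anti/andP; split.
  by apply/bigmax_leP; split=> [|b bG]; rewrite -secantE; apply: secant_le_good.
have [hlg _ _ lhg] := edge_P g.
by rewrite -{1}(secant_edge f hlg lhg) secantE; apply: le_bigmax_cond.
Qed.

End ConvexExtension.
End ThreePointConvexity.

Lemma leq_card_bigcup (I T : finType) (P : pred I) (A : I -> {set T}) :
  (#|\bigcup_(i | P i) A i| <= \sum_(i | P i) #|A i|)%N.
Proof.
apply: (big_ind2 (fun (B : {set T}) s => #|B| <= s)%N) => [|B1 B2 s1 s2 h1 h2|//].
  by rewrite cards0.
exact: leq_trans (leq_card_setU _ _).1 (leq_add h1 h2).
Qed.

Local Open Scope nat_scope.

Section QuerySets.
Variable n : nat.
Local Notation N := n.+1.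

Definition grid (J : nat) : {set 'I_N} := [set y : 'I_N | (2 ^ J %| y) || (2 ^ J %| y.+1)].

(* The multiples (x/2^j + k - 2) 2^j, k < 4, of 2^j around x (truncated at 0),
   together with their predecessors. *)
Definition nbhd (j : nat) (x : 'I_N) : {set 'I_N} :=
  [set y : 'I_N | [exists k : 'I_4, exists e : 'I_2,
                    val y == (x %/ 2 ^ j + k - 2) * 2 ^ j - e]].

Definition query_set (J : nat) (x : 'I_N) : {set 'I_N} := grid J :|: \bigcup_(j < J) nbhd j x.

Lemma mem_nbhd j (x y : 'I_N) k e : k < 4 -> e < 2 ->
  y = (x %/ 2 ^ j + k - 2) * 2 ^ j - e :> nat -> y \in nbhd j x.
Proof.
move=> k4 e2 ye; rewrite inE; apply/existsP; exists (Ordinal k4).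
by apply/existsP; exists (Ordinal e2); apply/eqP.
Qed.

Lemma mem_nbhd0 (x y : 'I_N) : x <= y.+1 -> y <= x.+1 -> y \in nbhd 0 x.
Proof.
move=> xy yx; apply: (@mem_nbhd _ _ _ (y + 2 - x) 0); rewrite ?expn0 ?divn1 ?muln1; lia.
Qed.

Lemma grid_sub_query_set J x : grid J \subset query_set J x.
Proof. exact: subsetUl. Qed.

Lemma nbhd_sub_query_set J j x : j < J -> nbhd j x \subset query_set J x.
Proof.
by move=> jJ; apply: subset_trans (subsetUr _ _); apply: (bigcup_sup (Ordinal jJ)).
Qed.

Lemma grid_edge J (b g : 'I_N) : 2 ^ J <= g - b -> edge_within (grid J) b g.
Proof.
move=> gap; set p := 2 ^ J; have p0 : 0 < p by rewrite expn_gt0.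
set m := (b %/ p).+1 * p.
have bm : b < m by apply: ltn_ceil.
have mb : m <= b + p by rewrite /m mulSn addnC leq_add2r leq_divM.
have mN : m < N by have := ltn_ord g; lia.
have m1N : m.-1 < N by lia.
have pm : p %| m by rewrite dvdn_mull.
exists (Ordinal m1N), (Ordinal mN); rewrite !inE /= pm prednK ?pm ?orbT //; last lia.
split => //; lia.
Qed.

Lemma nbhd_edge j (b g : 'I_N) : 2 ^ j <= g - b < 2 ^ j.+1 ->
  edge_within (nbhd j b :&: nbhd j g) b g.
Proof.
move=> /andP[lo hi]; set q := 2 ^ j; have q0 : 0 < q by rewrite expn_gt0.
have q2 : 2 ^ j.+1 = q + q by rewrite expnS /q; lia.
set u := b %/ q; set v := g %/ q; set m := u.+1 * q.
have mb : m = u * q + q by rewrite /m mulSn addnC.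
have ub := leq_divM b q; have vg := leq_divM g q.
have ub' : b < u * q + q by have := ltn_ceil b q0; rewrite mulSn; lia.
have vg' : g < v * q + q by have := ltn_ceil g q0; rewrite mulSn; lia.
have uv1 : u < v by rewrite /v leq_divRL //; lia.
have uv2 : v < u + 3 by rewrite /v ltn_divLR //; lia.
have mN : m < N by have := ltn_ord g; lia.
have m1N : m.-1 < N by lia.
have mem e : e < 2 -> m - e < N -> exists y : 'I_N, y = m - e :> nat /\ y \in nbhd j b :&: nbhd j g.
  move=> e2 meN; exists (Ordinal meN); split => //; rewrite inE.
  apply/andP; split; [apply: (@mem_nbhd _ _ _ 3 e) | apply: (@mem_nbhd _ _ _ (u + 3 - v) e)];
    rewrite //= -/q -?/u -?/v; lia.
have [d [dm dP]] := mem 1 isT (leq_ltn_trans (leq_subr 1 m) mN).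
have [d' [d'm d'P]] := mem 0 isT (leq_ltn_trans (leq_subr 0 m) mN).
exists d, d'; split => //; lia.
Qed.

Lemma query_set_common_edge J (b g : 'I_N) : b < g ->
  edge_within (query_set J b :&: query_set J g) b g.
Proof.
move=> bg; have [far|near] := leqP (2 ^ J) (g - b).
  by apply: edge_withinS (grid_edge far); rewrite subsetI !grid_sub_query_set.
set j := trunc_log 2 (g - b).
have bounds : 2 ^ j <= g - b < 2 ^ j.+1 by apply: trunc_log_bounds; lia.
have jJ : j < J.
  rewrite -(ltn_exp2l _ _ (isT : 1 < 2)); case/andP: bounds => lo _.
  exact: leq_ltn_trans lo near.
by apply: edge_withinS (nbhd_edge bounds); apply: setISS; apply: nbhd_sub_query_set.
Qed.

Definition edge_lo (b : 'I_N) : 'I_N := if b < n then b else inord b.-1.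
Definition edge_hi (b : 'I_N) : 'I_N := inord (edge_lo b).+1.

Lemma query_set_edge J (b : 'I_N) : 0 < n -> 0 < J ->
  [/\ edge_hi b = (edge_lo b).+1 :> nat, edge_lo b \in query_set J b,
      edge_hi b \in query_set J b & edge_lo b = b \/ edge_hi b = b].
Proof.
move=> n0 J0; have bN := ltn_ord b.
have lo_val : edge_lo b = (if b < n then b : nat else b.-1) :> nat.
  by rewrite /edge_lo; case: ifP => //= _; rewrite inordK //; lia.
have hi_val : edge_hi b = (edge_lo b).+1 :> nat.
  by rewrite /edge_hi inordK // lo_val; case: ifP; lia.
have sub0 := nbhd_sub_query_set b J0.
split => //.
- by apply: (subsetP sub0); apply: mem_nbhd0; rewrite lo_val; case: ifP; lia.
- by apply: (subsetP sub0); apply: mem_nbhd0; rewrite hi_val lo_val; case: ifP; lia.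
case: (ltnP b n) => bn; [left | right]; apply: val_inj => /=.
  by rewrite lo_val bn.
by rewrite hi_val lo_val ltnNge bn /=; lia.
Qed.

Lemma card_nbhd j x : #|nbhd j x| <= 8.
Proof.
pose F (ke : 'I_4 * 'I_2) : 'I_N := inord ((x %/ 2 ^ j + ke.1 - 2) * 2 ^ j - ke.2).
apply: (@leq_trans #|F @: setT|).
  apply/subset_leq_card/subsetP => y; rewrite inE => /existsP[k /existsP[e /eqP ye]].
  by apply/imsetP; exists (k, e); rewrite ?inE // /F /= -ye inord_val.
by apply: leq_trans (leq_imset_card F setT) _; rewrite cardsT card_prod !card_ord.
Qed.

Lemma card_grid J : #|grid J| <= 2 * (N %/ 2 ^ J).+1.
Proof.
set p := 2 ^ J; have p0 : 0 < p by rewrite expn_gt0.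
pose F (ke : 'I_(N %/ p).+1 * 'I_2) : 'I_N := inord (ke.1 * p - ke.2).
apply: (@leq_trans #|F @: setT|).
  apply/subset_leq_card/subsetP => y; rewrite inE => /orP[py|py].
    have k : y %/ p < (N %/ p).+1 by rewrite ltnS leq_div2r // ltnW.
    apply/imsetP; exists (Ordinal k, ord0); rewrite ?inE //.
    by rewrite /F /= subn0 divnK // inord_val.
  have k : y.+1 %/ p < (N %/ p).+1 by rewrite ltnS leq_div2r.
  apply/imsetP; exists (Ordinal k, ord_max); rewrite ?inE //.
  by rewrite /F /= divnK // subn1 inord_val.
by apply: leq_trans (leq_imset_card F setT) _; rewrite cardsT card_prod !card_ord mulnC.
Qed.

End QuerySets.

Local Open Scope ring_scope.

Section ConvexityTester.
Variable R : realType.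

Definition convexity_decision N (S : {set 'I_N}) (vals : seq R) : bool :=
  convex_on S (fun y => nth 0 vals (index y (enum S))).

Lemma convexity_decision_map N (S : {set 'I_N}) (f : 'I_N -> R) :
  convexity_decision S (map f (enum S)) = convex_on S f.
Proof.
apply: eq_convex_on => y yS.
by rewrite (nth_map y) ?index_mem ?mem_enum // nth_index ?mem_enum.
Qed.

Lemma acc_prob_convexity_decision N (Omega : finType) (D : Omega -> R)
    (S : Omega -> {set 'I_N}) (f : 'I_N -> R) :
  acc_prob D (fun w => enum (S w)) (fun w => convexity_decision (S w)) f
  = \sum_(w : Omega) D w * (convex_on (S w) f)%:R.
Proof. by apply: eq_bigr => w _; rewrite convexity_decision_map. Qed.

Lemma eps_far_card_le N (eps : R) (f h : 'I_N -> R) (G : {set 'I_N}) :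
  eps_far eps f -> convex_fun h -> {in G, h =1 f} -> #|G|%:R <= (1 - eps) * N%:R.
Proof.
move=> far hc hf.
have sub : [set x | f x != h x] \subset ~: G.
  by apply/subsetP => x; rewrite !inE; apply: contra => /hf ->.
have : (#|[set x | f x != h x]| + #|G| <= N)%N.
  rewrite -[X in (_ <= X)%N](card_ord N) -(cardsC G) addnC leq_add2l.
  exact: subset_leq_card.
rewrite -(ler_nat R) natrD; have := far h hc; lra.
Qed.

Lemma sum_uniform_ffun_on N t (G : {set 'I_N}) :
  \sum_(w : {ffun 'I_t -> 'I_N}) (N%:R ^+ t)^-1 * (w \in ffun_on G)%:R
  = (#|G|%:R / N%:R) ^+ t :> R.
Proof.
rewrite (eq_bigr (fun w => if w \in ffun_on G then (N%:R ^+ t)^-1 else 0)); last first.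
  by move=> w _; case: ifP; rewrite ?mulr1 ?mulr0.
rewrite -big_mkcond sumr_const card_ffun_on card_ord -[_ *+ (_ ^ t)]mulr_natr natrX.
by rewrite exprMn exprVn mulrC.
Qed.

Lemma bernoulli_le (x : R) k : 0 <= x -> 1 + k%:R * x <= (1 + x) ^+ k.
Proof.
move=> x0; elim: k => [|k IH]; first by rewrite mul0r addr0 expr0.
have : 0 <= k%:R :> R := ler0n _ _.
rewrite exprS -natr1; nra.
Qed.

Lemma expr1B_le_third (eps : R) t : 0 < eps -> eps < 1 -> 2 < t%:R * eps ->
  (1 - eps) ^+ t <= 1 / 3.
Proof.
move=> e0 e1 te.
have b := bernoulli_le t (ltW e0).
have h1 : (1 - eps) ^+ t * (1 + eps) ^+ t <= 1 by rewrite -exprMn; apply: exprn_ile1; nra.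
have : 0 <= (1 - eps) ^+ t by apply: exprn_ge0; lra.
nra.
Qed.

End ConvexityTester.

Section UniformSampleTester.
Variables (R : realType) (n : nat) (eps : R).
Local Notation N := n.+1.

Definition samples : nat := (Num.truncn (2 / eps)).+1.
Definition scales : nat := (trunc_log 2 (N %/ samples)).+2.
Local Notation seed := {ffun 'I_samples -> 'I_N}.

Definition queries (w : seed) : {set 'I_N} :=
  grid n scales :|: \bigcup_(i < samples) \bigcup_(j < scales) nbhd j (w i).

Definition uniform (w : seed) : R := (N%:R ^+ samples)^-1.

Lemma uniform_distr : is_distr uniform.
Proof.
split=> [w|]; first by rewrite /uniform invr_ge0 exprn_ge0.
rewrite /uniform sumr_const card_ffun !card_ord -[_ *+ (_ ^ _)]mulr_natr natrX mulVf //.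
by rewrite expf_neq0 // pnatr_eq0.
Qed.

Lemma samples_gt : 0 < eps -> 2 < samples%:R * eps.
Proof. by move=> e0; rewrite -ltr_pdivrMr //; apply: truncnS_gt. Qed.

Lemma samples_le : 0 < eps -> eps < 1 -> samples%:R <= 3 / eps.
Proof.
move=> e0 e1; have : 1 <= eps^-1 by rewrite invf_ge1 // ltW.
have : samples%:R <= 2 / eps + 1.
  by rewrite /samples -natr1 lerD2r truncn_le; apply: divr_ge0; lra.
lra.
Qed.

Lemma grid_small : (2 * N < 2 ^ scales * samples)%N.
Proof.
have := trunc_log_ltn (N %/ samples) (isT : (1 < 2)%N).
by rewrite ltn_divLR // /scales [(2 ^ _.+2)%N]expnS -mulnA ltn_mul2l.
Qed.

Lemma size_queries w :
  (size (enum (queries w)) <= samples + 2 + 8 * samples * scales)%N.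
Proof.
rewrite -cardE; apply: leq_trans (leq_card_setU _ _).1 _.
have grid_le : (#|grid n scales| <= samples + 2)%N.
  apply: leq_trans (card_grid _ _) _.
  have := grid_small; have := leq_divM N (2 ^ scales).
  set a := (N %/ 2 ^ scales)%N; set p := (2 ^ scales)%N => ap small.
  have : (2 * a * p < samples * p)%N by lia.
  by rewrite ltn_pmul2r ?expn_gt0 //; lia.
have nbhd_le :
    (#|\bigcup_(i < samples) \bigcup_(j < scales) nbhd j (w i)| <= samples * (scales * 8))%N.
  apply: leq_trans (leq_card_bigcup _ _) _.
  apply: (@leq_trans (\sum_(i < samples) \sum_(j < scales) 8)%N); last first.
    by rewrite !sum_nat_const !card_ord.
  apply: leq_sum => i _; apply: leq_trans (leq_card_bigcup _ _) _.
  by apply: leq_sum => j _; apply: card_nbhd.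
by apply: leq_trans (leq_add grid_le nbhd_le) _; lia.
Qed.

Definition good (f : 'I_N -> R) : {set 'I_N} := [set x | convex_on (query_set scales x) f].

Lemma query_set_sub_queries (w : seed) i : query_set scales (w i) \subset queries w.
Proof. by apply: setUS; apply: (bigcup_sup i). Qed.

Lemma card_good_le f : 0 < eps -> eps_far eps f -> #|good f|%:R <= (1 - eps) * N%:R.
Proof.
move=> e0 far; have [n0|n_gt0] := posnP n.
  have N1 : (N <= 1)%N by rewrite n0.
  have := eps_far_card_le (G := setT) far (convex_fun_le1 f N1) (fun x _ => erefl).
  rewrite cardsT card_ord; have : 0 < eps * N%:R by rewrite mulr_gt0 ?ltr0n.
  lra.
have [h hc hf] : exists2 h, convex_fun h & {in good f, h =1 f}.
  apply: (convex_extension (P := query_set scales) (lo := @edge_lo n) (hi := @edge_hi n)).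
  - by move=> b; rewrite inE.
  - by move=> b; apply: query_set_edge.
  - by move=> b g _ _; apply: query_set_common_edge.
exact: eps_far_card_le far hc hf.
Qed.

Lemma tester_complete f : convex_fun f ->
  acc_prob uniform (fun w => enum (queries w)) (fun w => convexity_decision (queries w)) f = 1.
Proof.
move=> fc; rewrite acc_prob_convexity_decision.
under eq_bigr do rewrite convex_fun_convex_on // mulr1.
by case: uniform_distr.
Qed.

Lemma tester_sound f : 0 < eps -> eps < 1 -> eps_far eps f ->
  acc_prob uniform (fun w => enum (queries w)) (fun w => convexity_decision (queries w)) f
  <= 1 / 3.
Proof.
move=> e0 e1 far; rewrite acc_prob_convexity_decision.
apply: (@le_trans _ _ (\sum_(w : seed) uniform w * (w \in ffun_on (good f))%:R)).
  apply: ler_sum => w _; apply: ler_wpM2l; first by rewrite /uniform invr_ge0 exprn_ge0.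
  have [qw|_] := boolP (convex_on (queries w) f); last exact: ler0n.
  suff -> : w \in ffun_on (good f) by [].
  by apply/ffun_onP => i; rewrite inE (convex_onS (query_set_sub_queries w i) qw).
rewrite /uniform sum_uniform_ffun_on.
apply: le_trans (expr1B_le_third e0 e1 (samples_gt e0)).
rewrite lerXn2r ?nnegrE ?divr_ge0 ?subr_ge0 ?(ltW e1) //.
by rewrite ler_pdivrMr ?ltr0n //; apply: card_good_le.
Qed.

Lemma div_samples_le : 0 < eps -> (N %/ samples)%:R <= eps * N%:R.
Proof.
move=> e0; have := samples_gt e0.
have : (N %/ samples * samples)%:R <= N%:R :> R by rewrite ler_nat leq_divM.
rewrite natrM; have : 0 <= (N %/ samples)%:R :> R := ler0n _ _.
nra.
Qed.

Lemma scales_ln : 0 < eps ->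
  (trunc_log 2 (N %/ samples))%:R * ln 2 <= ln (Num.max 1 (eps * N%:R)).
Proof.
move=> e0; have [->|pos] := posnP (N %/ samples).
  by rewrite trunc_log0 mul0r; apply: ln_ge0; rewrite le_max lexx.
have pow_le : (2 ^ trunc_log 2 (N %/ samples))%:R <= Num.max 1 (eps * N%:R) :> R.
  rewrite le_max (le_trans _ (div_samples_le e0)) ?orbT // ler_nat.
  exact: trunc_logP.
move: pow_le; rewrite -ler_ln ?posrE ?ltr0n ?expn_gt0 ?lt_max ?ltr01 //.
by rewrite natrX lnXn // mulr_natl.
Qed.

Lemma query_bound : 0 < eps -> eps < 1 ->
  (samples + 2 + 8 * samples * scales)%:R
  <= (53 + 24 / ln 2) * (1 + ln (Num.max 1 (eps * N%:R))) / eps.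
Proof.
move=> e0 e1.
set L := ln (Num.max _ _); set K := trunc_log 2 (N %/ samples).
have L0 : 0 <= L by apply: ln_ge0; rewrite le_max lexx.
have ln2 : 0 < ln 2 :> R by apply: ln_gt0; lra.
have KL : K%:R <= L / ln 2 by rewrite ler_pdivlMr //; apply: scales_ln.
have K0 : 0 <= K%:R :> R := ler0n _ _.
have -> : (samples + 2 + 8 * samples * scales = samples * (17 + 8 * K) + 2)%N.
  by rewrite /scales -/K; lia.
rewrite natrD natrM natrD natrM.
have : samples%:R * (17 + 8%:R * K%:R) <= 3 / eps * (17 + 8 * (L / ln 2)).
  by apply: ler_pM; rewrite ?samples_le //; lra.
have : 1 <= eps^-1 by rewrite invf_ge1 // ltW.
have : 0 <= L / ln 2 by rewrite divr_ge0 // ltW.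
have : 0 <= (ln 2)^-1 :> R by rewrite invr_ge0 ltW.
nra.
Qed.
End UniformSampleTester.

Unset Implicit Arguments.

Theorem theorem1p1 (R : realType) :
  exists C : R, 0 < C /\
  forall (n : nat) (eps : R), (1 <= n)%N -> 0 < eps -> eps < 1 ->
    exists (q : nat) (Omega : finType) (D : Omega -> R)
           (Q : Omega -> seq 'I_n) (dec : Omega -> seq R -> bool),
      q%:R <= C * (1 + ln (Num.max 1 (eps * n%:R))) / eps /\
      nonadaptive_1sided_tester eps q D Q dec.
Proof.
have ln2_gt0 : 0 < ln 2 :> R by apply: ln_gt0; lra.
exists (53 + 24 / ln 2); split; first by have := divr_gt0 (ltr0n R 24) ln2_gt0; lra.
case=> [//|n] eps _ e0 e1.
exists (samples eps + 2 + 8 * samples eps * scales n eps)%N, _, (@uniform _ n eps),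
  (fun w => enum (queries w)), (fun w => convexity_decision (queries w)).
split; first exact: query_bound.
split; [exact: uniform_distr | exact: size_queries | exact: tester_complete |].
by move=> f; apply: tester_sound.
Qed.
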